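(* For every integer $n\ge1$: $$\beta(n)^2=\sum_{dk=n}d\,2^{\omega(d)}\lambda(d)\,\sigma_2(k),\qquad \beta(n^2)=\sum_{dk=n}d\,\mu(d)\,\sigma_2(k),\qquad \beta(n)\sigma(n)=\sum_{d^2k=n}d^2\,2^{\omega(d)}\beta_2(k),$$ where the sums run over pairs of positive integers $(d,k)$ with the indicated product equal to $n$.
   Context: $\lambda$ is the Liouville function, $\mu$ the Möbius function, $\omega(n)$ the number of distinct prime factors of $n$. $\beta(n)=\sum_{d\mid n}d\,\lambda(n/d)$, $\beta_2(n)=\sum_{d\mid n}d^2\lambda(n/d)$, $\sigma(n)=\sum_{d\mid n}d$, $\sigma_2(n)=\sum_{d\mid n}d^2$. *)

From HB Require Import structures.
From mathcomp Require Import all_boot all_order all_algebra.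
Set Implicit Arguments. Unset Strict Implicit. Unset Printing Implicit Defensive.
Import Order.TTheory GRing.Theory Num.Theory.
Local Open Scope ring_scope.

Definition bigOmega (n : nat) : nat := (\sum_(p <- primes n) logn p n)%N.
Definition omega (n : nat) : nat := size (primes n).
Definition liouville (n : nat) : int := (-1) ^+ bigOmega n.
Definition moebius (n : nat) : int :=
  if [forall p : 'I_n.+1, prime p ==> ~~ (p * p %| n)%N]
  then (-1) ^+ omega n else 0.
Definition beta (n : nat) : int :=
  \sum_(d <- divisors n) (d%:Z * liouville (n %/ d)%N).
Definition beta2 (n : nat) : int :=
  \sum_(d <- divisors n) ((d ^ 2)%N%:Z * liouville (n %/ d)%N).
Definition sigma (n : nat) : int := \sum_(d <- divisors n) d%:Z.
Definition sigma2 (n : nat) : int := \sum_(d <- divisors n) (d ^ 2)%N%:Z.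

From HB Require Import structures.
From mathcomp Require Import all_boot all_order all_algebra.
From mathcomp Require Import ring zify.
Set Implicit Arguments. Unset Strict Implicit. Unset Printing Implicit Defensive.
Import Order.TTheory GRing.Theory Num.Theory.
Local Open Scope ring_scope.

(* Every side of the three identities is a multiplicative arithmetic function
   of n: beta, beta_2, sigma, sigma_2, lambda, mu, d |-> d and d |-> 2 ^ omega d
   are multiplicative, and so are pointwise products, n |-> f (n ^ 2), Dirichlet
   convolutions and, more generally, divisor sums sum_(d | n) K d n whose kernel
   splits along coprime factorisations.  Two multiplicative functions that agree
   at all prime powers agree everywhere, so each identity reduces to n = p ^ k.
   There, with x = p, beta (p ^ k) = altgeom x k = sum_(i <= k) x ^ i (-1) ^ (k - i),
   sigma (p ^ k) = geom x k = sum_(i <= k) x ^ i, and beta_2, sigma_2 are the same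
   polynomials at x ^ 2; each identity becomes a polynomial identity, proved over
   an arbitrary commutative ring by induction on k from the closed forms
   (1 + x) altgeom x k = x ^ (k + 1) + (-1) ^ k and (x - 1) geom x k = x ^ (k + 1) - 1. *)

Lemma gcdn_coprime_mul m n a b :
  coprime m n -> (a %| m)%N -> (b %| n)%N -> gcdn (a * b) m = a.
Proof.
move=> co_mn a_m b_n; rewrite gcdnC Gauss_gcdl; first exact/gcdn_idPr.
exact: coprime_dvdr b_n co_mn.
Qed.

Section CoprimeDivisors.
Variables (m n : nat).
Hypothesis co_mn : coprime m n.

Lemma coprime_dvdn_split d : (d %| m * n)%N -> d = (gcdn d m * gcdn d n)%N.
Proof.
move=> d_mn; apply/eqP; rewrite eqn_dvd; apply/andP; split; last first.
  rewrite Gauss_dvd ?dvdn_gcdl //.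
  exact: coprime_dvdl (dvdn_gcdr _ _) (coprime_dvdr (dvdn_gcdr _ _) co_mn).
have /gcdn_idPl d_eq := d_mn.
rewrite -{1}d_eq muln_gcdr !muln_gcdl !dvdn_gcd.
have g_d := dvdn_gcdl d (m * n).
by rewrite dvdn_gcdr (dvdn_mulr _ g_d) (dvdn_mull _ g_d) (dvdn_mulr _ g_d).
Qed.

Hypotheses (m_gt0 : (0 < m)%N) (n_gt0 : (0 < n)%N).

Lemma divisors_coprimeM :
  perm_eq (divisors (m * n)) [seq (a * b)%N | a <- divisors m, b <- divisors n].
Proof.
have gcdn_mulr a b : (a %| m)%N -> (b %| n)%N -> gcdn (a * b) n = b.
  by move=> a_m b_n; rewrite mulnC (@gcdn_coprime_mul n m b a _ b_n a_m) // coprime_sym.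
apply: uniq_perm; first exact: divisors_uniq.
  apply: allpairs_uniq; rewrite ?divisors_uniq //.
  move=> [a b] [a' b'] /allpairsP[[a1 b1] [/= a1_m b1_n [-> ->]]].
  move=> /allpairsP[[a2 b2] [/= a2_m b2_n [-> ->]]] /= eq_ab.
  rewrite -!dvdn_divisors // in a1_m b1_n a2_m b2_n.
  have := gcdn_coprime_mul co_mn a1_m b1_n; have := gcdn_mulr _ _ a1_m b1_n.
  by rewrite eq_ab (gcdn_coprime_mul co_mn a2_m b2_n) gcdn_mulr // => -> ->.
move=> d; rewrite -dvdn_divisors ?muln_gt0 ?m_gt0 //; apply/idP/allpairsP.
  move=> d_mn; exists (gcdn d m, gcdn d n).
  by rewrite /= -!dvdn_divisors // !dvdn_gcdr -coprime_dvdn_split.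
by move=> [[a b] /= [a_m b_n ->]]; rewrite dvdn_mul // dvdn_divisors.
Qed.

Lemma sum_divisors_coprimeM (R : nmodType) (F : nat -> R) :
  \sum_(d <- divisors (m * n)) F d =
  \sum_(a <- divisors m) \sum_(b <- divisors n) F (a * b)%N.
Proof. by rewrite (perm_big _ divisors_coprimeM) big_allpairs_dep. Qed.

End CoprimeDivisors.

Lemma divn_dvd_gt0 k d : (0 < k)%N -> (d %| k)%N -> (0 < k %/ d)%N.
Proof. by move=> k_gt0 d_k; rewrite divn_gt0 ?(dvdn_gt0 k_gt0 d_k) // dvdn_leq. Qed.

Lemma divn_mulM m n a b : (a %| m)%N -> (b %| n)%N ->
  ((m * n) %/ (a * b) = (m %/ a) * (n %/ b))%N.
Proof.
move=> a_m b_n; have [->|a_gt0] := posnP a; first by rewrite mul0n !divn0.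
have [->|b_gt0] := posnP b; first by rewrite muln0 !divn0 muln0.
by rewrite -{1}(divnK a_m) -{1}(divnK b_n) mulnACA mulnK // muln_gt0 a_gt0.
Qed.

Section Multiplicative.
Variable R : comPzRingType.

Definition arith_multiplicative (f : nat -> R) : Prop :=
  f 1%N = 1 /\ forall m n, (0 < m)%N -> (0 < n)%N -> coprime m n ->
    f (m * n)%N = f m * f n.

Lemma arith_multiplicative_ext (f g : nat -> R) :
  f =1 g -> arith_multiplicative f -> arith_multiplicative g.
Proof. by move=> fg [f1 fM]; split=> [|m n *]; rewrite -!fg ?fM. Qed.

Lemma arith_multiplicativeM (f g : nat -> R) :
  arith_multiplicative f -> arith_multiplicative g ->
  arith_multiplicative (fun n => f n * g n).
Proof.
move=> [f1 fM] [g1 gM]; split=> [|m n m_gt0 n_gt0 co_mn]; first by rewrite f1 g1 mulr1.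
by rewrite fM ?gM // mulrACA.
Qed.

Lemma arith_multiplicativeX (f : nat -> R) k :
  arith_multiplicative f -> arith_multiplicative (fun n => f n ^+ k).
Proof. by move=> [f1 fM]; split=> [|m n *]; rewrite ?f1 ?expr1n ?fM ?exprMn. Qed.

Lemma arith_multiplicative_sq (f : nat -> R) :
  arith_multiplicative f -> arith_multiplicative (fun n => f (n * n)%N).
Proof.
move=> [f1 fM]; split=> // m n m_gt0 n_gt0 co_mn.
by rewrite mulnACA fM ?muln_gt0 ?m_gt0 ?n_gt0 // coprimeMl !coprimeMr co_mn.
Qed.

Lemma divisor_sum_multiplicative (K : nat -> nat -> R) :
  K 1%N 1%N = 1 ->
  (forall m n a b, (0 < m)%N -> (0 < n)%N -> coprime m n ->
     (a %| m)%N -> (b %| n)%N -> K (a * b)%N (m * n)%N = K a m * K b n) ->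
  arith_multiplicative (fun n => \sum_(d <- divisors n) K d n).
Proof.
move=> K1 KM; split=> [|m n m_gt0 n_gt0 co_mn]; first by rewrite big_seq1.
rewrite sum_divisors_coprimeM // big_distrl; apply: eq_big_seq => a.
rewrite -dvdn_divisors // => a_m; rewrite big_distrr; apply: eq_big_seq => b.
by rewrite -dvdn_divisors // => b_n; apply: KM.
Qed.

Definition dconv (f g : nat -> R) (n : nat) : R :=
  \sum_(d <- divisors n) f d * g (n %/ d)%N.

Lemma dconv_multiplicative (f g : nat -> R) :
  arith_multiplicative f -> arith_multiplicative g -> arith_multiplicative (dconv f g).
Proof.
move=> [f1 fM] [g1 gM]; apply: divisor_sum_multiplicative; first by rewrite f1 g1 mulr1.
move=> m n a b m_gt0 n_gt0 co_mn a_m b_n.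
have [a_gt0 b_gt0] := (dvdn_gt0 m_gt0 a_m, dvdn_gt0 n_gt0 b_n).
rewrite divn_mulM // fM ?gM ?(divn_dvd_gt0 m_gt0) ?(divn_dvd_gt0 n_gt0) //; first exact: mulrACA.
- exact: coprime_dvdl (dvdn_div a_m) (coprime_dvdr (dvdn_div b_n) co_mn).
- exact: coprime_dvdl a_m (coprime_dvdr b_n co_mn).
Qed.

Lemma arith_multiplicative_eq (f g : nat -> R) :
  arith_multiplicative f -> arith_multiplicative g ->
  (forall p k, prime p -> (0 < k)%N -> f (p ^ k)%N = g (p ^ k)%N) ->
  forall n, (0 < n)%N -> f n = g n.
Proof.
move=> [f1 fM] [g1 gM] fg_pk; elim/ltn_ind=> n IHn n_gt0.
have [n_le1|n_gt1] := leqP n 1.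
  have -> : n = 1%N by lia.
  by rewrite f1 g1.
pose p := pdiv n; have p_pr : prime p := pdiv_prime n_gt1.
have lognp_gt0 : (0 < logn p n)%N by rewrite logn_gt0 mem_primes p_pr n_gt0 pdiv_dvd.
have n_split := partnC p n_gt0.
rewrite -n_split fM ?gM ?part_gt0 ?coprime_partC // p_part fg_pk //.
congr (_ * _); apply: IHn; last exact: part_gt0.
rewrite -{2}n_split ltn_Pmull ?part_gt0 // p_part.
by rewrite -(expn0 p) ltn_exp2l ?prime_gt1.
Qed.

End Multiplicative.

Lemma primes_coprimeM m n : (0 < m)%N -> (0 < n)%N -> coprime m n ->
  perm_eq (primes (m * n)) (primes m ++ primes n).
Proof.
move=> m_gt0 n_gt0 co_mn; apply: uniq_perm => [||p]; first exact: primes_uniq.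
  by rewrite cat_uniq !primes_uniq -coprime_has_primes // co_mn.
by rewrite mem_cat primesM.
Qed.

Lemma coprime_mem_primes k l p : coprime k l -> p \in primes k -> coprime p l.
Proof. by move=> co_kl; rewrite mem_primes => /and3P[_ _ p_k]; apply: coprime_dvdl p_k co_kl. Qed.

Lemma omegaM m n : (0 < m)%N -> (0 < n)%N -> coprime m n ->
  omega (m * n) = (omega m + omega n)%N.
Proof. by move=> *; rewrite /omega (perm_size (primes_coprimeM _ _ _)) ?size_cat. Qed.

Lemma omega_pfactor p k : prime p -> (0 < k)%N -> omega (p ^ k) = 1%N.
Proof. by move=> p_pr k_gt0; rewrite /omega primesX // primes_prime. Qed.

Lemma bigOmegaM m n : (0 < m)%N -> (0 < n)%N -> coprime m n ->
  bigOmega (m * n) = (bigOmega m + bigOmega n)%N.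
Proof.
move=> m_gt0 n_gt0 co_mn.
rewrite /bigOmega (perm_big _ (primes_coprimeM m_gt0 n_gt0 co_mn)) big_cat /=.
congr (_ + _)%N; apply: eq_big_seq => p p_in.
  by rewrite mulnC logn_Gauss // (coprime_mem_primes co_mn).
by rewrite logn_Gauss // (coprime_mem_primes _ p_in) // coprime_sym.
Qed.

Lemma bigOmega_pfactor p k : prime p -> bigOmega (p ^ k) = k.
Proof.
move=> p_pr; case: k => [|k]; first by rewrite expn0 /bigOmega /= big_nil.
by rewrite /bigOmega primesX // primes_prime // big_seq1 pfactorK.
Qed.

Lemma liouville_multiplicative : arith_multiplicative liouville.
Proof.
split=> [|m n m_gt0 n_gt0 co_mn]; first by rewrite /liouville /bigOmega /= big_nil.
by rewrite /liouville bigOmegaM // exprD.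
Qed.

Lemma liouville_pfactor p k : prime p -> liouville (p ^ k) = (-1) ^+ k.
Proof. by move=> p_pr; rewrite /liouville bigOmega_pfactor. Qed.

Lemma squarefreeP n : (0 < n)%N ->
  reflect (forall p, prime p -> ~~ (p * p %| n)%N)
          [forall p : 'I_n.+1, prime p ==> ~~ (p * p %| n)%N].
Proof.
move=> n_gt0; apply: (iffP forallP) => [sqf_n p p_pr|sqf_n p]; last first.
  by apply/implyP; apply: sqf_n.
apply/negP => pp_n; have p_lt_n1 : (p < n.+1)%N.
  by rewrite ltnS (leq_trans _ (dvdn_leq n_gt0 pp_n)) // leq_pmull // prime_gt0.
by have := sqf_n (Ordinal p_lt_n1); rewrite /= p_pr pp_n.
Qed.

Lemma squarefreeM m n : (0 < m)%N -> (0 < n)%N -> coprime m n ->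
  [forall p : 'I_(m * n).+1, prime p ==> ~~ (p * p %| m * n)%N] =
  [forall p : 'I_m.+1, prime p ==> ~~ (p * p %| m)%N] &&
  [forall p : 'I_n.+1, prime p ==> ~~ (p * p %| n)%N].
Proof.
move=> m_gt0 n_gt0 co_mn; have mn_gt0 : (0 < m * n)%N by rewrite muln_gt0 m_gt0.
apply/(squarefreeP mn_gt0)/andP => [sqf_mn|].
  split; apply/squarefreeP => // p p_pr; apply: contra (sqf_mn p p_pr).
    exact: dvdn_mulr.
  exact: dvdn_mull.
move=> [/(squarefreeP m_gt0) sqf_m /(squarefreeP n_gt0) sqf_n] p p_pr.
apply/negP => pp_mn; have pp_coprime k l : coprime k l -> (p %| k)%N -> coprime (p * p) l.
  by move=> co_kl p_k; rewrite coprimeMl (coprime_dvdl p_k co_kl).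
have /orP[p_m|p_n] : ((p %| m) || (p %| n))%N.
  by rewrite -Euclid_dvdM // (dvdn_trans (dvdn_mulr _ (dvdnn p)) pp_mn).
  by move: pp_mn; rewrite Gauss_dvdl ?(pp_coprime m) //; apply/negP/sqf_m.
by move: pp_mn; rewrite Gauss_dvdr ?(pp_coprime n) 1?coprime_sym //; apply/negP/sqf_n.
Qed.

Lemma moebius_multiplicative : arith_multiplicative moebius.
Proof.
split=> [|m n m_gt0 n_gt0 co_mn].
  rewrite /moebius; suff /squarefreeP-> : forall p, prime p -> ~~ (p * p %| 1)%N by [].
  by move=> p p_pr; rewrite dvdn1 muln_eq1 andbb; apply: contraTN p_pr => /eqP->.
rewrite /moebius squarefreeM // omegaM // exprD.
by do 2![case: [forall _, _]]; rewrite ?mulr0 ?mul0r.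
Qed.

Lemma moebius_prime p : prime p -> moebius p = -1.
Proof.
move=> p_pr; rewrite /moebius /omega primes_prime //.
suff /(squarefreeP (prime_gt0 p_pr))-> : forall q, prime q -> ~~ (q * q %| p)%N by [].
move=> q q_pr; apply/negP => qq_p.
have /eqP q_eq_p : q == p by rewrite -dvdn_prime2 // (dvdn_trans (dvdn_mulr _ (dvdnn q)) qq_p).
move: qq_p; rewrite q_eq_p -{3}(muln1 p) dvdn_pmul2l ?prime_gt0 // dvdn1 => /eqP p_eq1.
by rewrite p_eq1 in p_pr.
Qed.

Lemma moebius_pfactorSS p k : prime p -> moebius (p ^ k.+2) = 0.
Proof.
move=> p_pr; rewrite /moebius; case: squarefreeP => [|sqf|//]; first by rewrite expn_gt0 prime_gt0.
by have := sqf p p_pr; rewrite !expnS mulnA dvdn_mulr.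
Qed.

Section PrimePowerIdentities.
Variable R : comPzRingType.
Implicit Types (x : R) (k : nat).

(* sigma (p ^ k) and beta (p ^ k), as polynomials in x = p. *)
Definition geom x k : R := \sum_(i < k.+1) x ^+ i.
Definition altgeom x k : R := \sum_(i < k.+1) x ^+ i * (-1) ^+ (k - i).

Lemma geom0 x : geom x 0 = 1.
Proof. by rewrite /geom big_ord1. Qed.

Lemma geomS x k : geom x k.+1 = geom x k + x ^+ k.+1.
Proof. by rewrite /geom big_ord_recr. Qed.

Lemma altgeom0 x : altgeom x 0 = 1.
Proof. by rewrite /altgeom big_ord1 mulr1. Qed.

Lemma altgeomS x k : altgeom x k.+1 = x ^+ k.+1 - altgeom x k.
Proof.
rewrite /altgeom big_ord_recr /= subnn mulr1 addrC -sumrN; congr (_ + _).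
by apply: eq_bigr => i _; rewrite subSn 1?exprS ?mulN1r ?mulrN // -ltnS.
Qed.

Lemma geom_closed x k : (x - 1) * geom x k = x ^+ k.+1 - 1.
Proof.
elim: k => [|k IHk]; first by rewrite geom0 mulr1 expr1.
by rewrite geomS mulrDr IHk !exprS; ring.
Qed.

Lemma altgeom_closed x k : (1 + x) * altgeom x k = x ^+ k.+1 + (-1) ^+ k.
Proof.
elim: k => [|k IHk]; first by rewrite altgeom0 mulr1 expr1 addrC.
by rewrite altgeomS mulrBr IHk !exprS; ring.
Qed.

Lemma geom_sqS x k : geom (x ^+ 2) k.+1 = geom (x ^+ 2) k + (x ^+ k.+1) ^+ 2.
Proof. by rewrite geomS exprAC. Qed.

Lemma altgeom_sqS x k : altgeom (x ^+ 2) k.+1 = (x ^+ k.+1) ^+ 2 - altgeom (x ^+ 2) k.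
Proof. by rewrite altgeomS exprAC. Qed.

Lemma altgeom_sq_closed x k :
  (1 + x ^+ 2) * altgeom (x ^+ 2) k = (x ^+ k.+1) ^+ 2 + (-1) ^+ k.
Proof. by rewrite altgeom_closed exprAC. Qed.

(* weight i = 2 ^ omega (p ^ i) for a prime p. *)
Definition weight (i : nat) : R := if i == 0%N then 1 else 2.

Lemma sum_weight k (F : nat -> R) :
  \sum_(i < k.+1) weight i * F i = 2 * \sum_(i < k.+1) F i - F 0%N.
Proof.
rewrite !big_ord_recl mulrDr mulr_sumr /weight /=.
ring.
Qed.

(* First identity: beta ^ 2 at p ^ k, through the alternating convolution of
   sigma_2 against (-x) ^ i. *)
Definition altconv x k : R := \sum_(i < k.+1) (- x) ^+ i * geom (x ^+ 2) (k - i).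

Lemma altconvS x k : altconv x k.+1 = geom (x ^+ 2) k.+1 - x * altconv x k.
Proof.
rewrite /altconv big_ord_recl subn0 expr0 mul1r mulr_sumr -sumrN; congr (_ + _).
by apply: eq_bigr => i _; rewrite subSS (exprS (- x)); ring.
Qed.

Lemma altconv_closed x k :
  (1 + x) * altconv x k = geom (x ^+ 2) k + x ^+ k.+1 * altgeom x k.
Proof.
elim: k => [|k IHk]; first by rewrite /altconv big_ord1 geom0 altgeom0; ring.
have -> : (1 + x) * altconv x k.+1 =
    (1 + x) * geom (x ^+ 2) k.+1 - x * ((1 + x) * altconv x k).
  by rewrite altconvS; ring.
by rewrite IHk geom_sqS altgeomS !exprS; ring.
Qed.

Lemma altgeom_sq x k : altgeom x k ^+ 2 = 2 * altconv x k - geom (x ^+ 2) k.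
Proof.
elim: k => [|k IHk]; first by rewrite /altconv big_ord1 altgeom0 geom0; ring.
have S_k : geom (x ^+ 2) k = (1 + x) * altconv x k - x ^+ k.+1 * altgeom x k.
  by rewrite altconv_closed; ring.
by rewrite altconvS geom_sqS altgeomS sqrrB IHk S_k; ring.
Qed.

(* Identity 1 at prime powers, in the shape of the divisor sum. *)
Lemma altgeom_sq_weighted x k : altgeom x k ^+ 2 =
  \sum_(i < k.+1) x ^+ i * weight i * (-1) ^+ i * geom (x ^+ 2) (k - i).
Proof.
rewrite altgeom_sq (eq_bigr (fun i : 'I_k.+1 =>
  weight i * ((- x) ^+ i * geom (x ^+ 2) (k - i)))) => [|i _]; last first.
  by rewrite -[- x]mulN1r exprMn; ring.
by rewrite (sum_weight k (fun i => (- x) ^+ i * geom (x ^+ 2) (k - i))) subn0 expr0 mul1r.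
Qed.

Lemma altgeomSS x k : altgeom x k.+2 = altgeom x k + (x - 1) * x ^+ k.+1.
Proof. by rewrite !altgeomS exprS; ring. Qed.

Lemma altgeom_double x k :
  altgeom x (k + k).+2 = geom (x ^+ 2) k.+1 - x * geom (x ^+ 2) k.
Proof.
elim: k => [|k IHk]; first by rewrite altgeomSS altgeom0 geom_sqS geom0; ring.
by rewrite addSn addnS altgeomSS IHk !geom_sqS !exprS exprD; ring.
Qed.

(* Third identity: beta * sigma at p ^ k, through the sum over square divisors
   sqconv x k = sum_(2i <= k) x ^ 2i * beta_2 (p ^ (k - 2i)). *)
Definition sqconv x k : R := \sum_(i < k.+1)
  (if (i + i <= k)%N then (x ^+ i) ^+ 2 * altgeom (x ^+ 2) (k - (i + i)) else 0).

Lemma sqconv0 x : sqconv x 0 = altgeom (x ^+ 2) 0.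
Proof. by rewrite /sqconv big_ord1 /= expr0 expr1n mul1r. Qed.

Lemma sqconv1 x : sqconv x 1 = altgeom (x ^+ 2) 1.
Proof. by rewrite /sqconv big_ord_recr big_ord1 /= expr0 expr1n mul1r addr0. Qed.

Lemma sqconvSS x k : sqconv x k.+2 = altgeom (x ^+ 2) k.+2 + x ^+ 2 * sqconv x k.
Proof.
rewrite /sqconv big_ord_recl /= expr0 expr1n mul1r; congr (_ + _).
rewrite big_ord_recr /= ifF ?addr0; last by rewrite /bump /=; apply/negbTE; lia.
rewrite mulr_sumr; apply: eq_bigr => i _; rewrite /bump /= addnS addSn !ltnS.
by case: ifP => _; rewrite ?mulr0 // subSS (exprS x i); ring.
Qed.

Lemma altgeom_geom_step x k :
  altgeom x k.+2 * geom x k.+2 + altgeom (x ^+ 2) k.+2 =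
  2 * altgeom (x ^+ 2) k.+2 + x ^+ 2 * (altgeom x k * geom x k + altgeom (x ^+ 2) k).
Proof.
apply: subr0_eq.
transitivity (- ((1 + x) * altgeom x k) * ((x - 1) * geom x k)
  + x ^+ k.+1 * ((1 + x) * altgeom x k) + x ^+ k.+1 * ((x - 1) * geom x k)
  - (1 + x ^+ 2) * altgeom (x ^+ 2) k).
  by rewrite 2!altgeom_sqS altgeomSS 2!geomS !exprS; ring.
by rewrite altgeom_closed geom_closed altgeom_sq_closed; ring.
Qed.

(* Since sqconv and (altgeom * geom + altgeom at x ^ 2) / 2 satisfy the same two-step
   recurrence and initial values, they coincide. *)
Lemma altgeom_geom x k : altgeom x k * geom x k = 2 * sqconv x k - altgeom (x ^+ 2) k.
Proof.
pose P j := altgeom x j * geom x j + altgeom (x ^+ 2) j = 2 * sqconv x j.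
suff /(_ k)[P_k _] : forall j, P j /\ P j.+1 by rewrite -P_k addrK.
elim=> [|j [P_j P_j1]]; first split.
- by rewrite /P /= sqconv0 !altgeom0 geom0; ring.
- by rewrite /P /= sqconv1 !altgeomS !altgeom0 geomS geom0; ring.
by split=> //; rewrite /P /= altgeom_geom_step P_j sqconvSS; ring.
Qed.

(* Identity 3 at prime powers, in the shape of the divisor sum. *)
Lemma altgeom_geom_weighted x k : altgeom x k * geom x k = \sum_(i < k.+1)
  (if (i + i <= k)%N then (x ^+ i) ^+ 2 * weight i * altgeom (x ^+ 2) (k - (i + i)) else 0).
Proof.
pose F i := if (i + i <= k)%N then (x ^+ i) ^+ 2 * altgeom (x ^+ 2) (k - (i + i)) else 0.
rewrite (eq_bigr (fun i : 'I_k.+1 => weight i * F i)) => [|i _]; last first.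
  by rewrite /F; case: ifP => _; rewrite ?mulr0 //; ring.
by rewrite sum_weight /F /= expr0 expr1n mul1r subn0 altgeom_geom.
Qed.

End PrimePowerIdentities.
Arguments weight {R} i.

Lemma PoszX m k : (m ^ k)%N%:Z = m%:Z ^+ k.
Proof. by rewrite -!natz natrX. Qed.

Section PrimePowerValues.
Variable p : nat.
Hypothesis p_pr : prime p.

Lemma sum_divisors_pfactor (V : nmodType) k (F : nat -> V) :
  \sum_(d <- divisors (p ^ k)) F d = \sum_(i < k.+1) F (p ^ i)%N.
Proof.
have divisors_pk : perm_eq (divisors (p ^ k)) [seq (p ^ i)%N | i <- iota 0 k.+1].
  apply: uniq_perm => [||d]; first exact: divisors_uniq.
    by rewrite map_inj_uniq ?iota_uniq //; apply/expnI/prime_gt1.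
  rewrite -dvdn_divisors ?expn_gt0 ?prime_gt0 //.
  apply/(dvdn_pfactor _ _ p_pr)/mapP => [[i i_le_k ->]|[i]].
    by exists i; rewrite // mem_iota.
  by rewrite mem_iota => /andP[_ i_lt_k1] ->; exists i.
rewrite (perm_big _ divisors_pk) big_map.
by rewrite -(big_mkord xpredT (fun i => F (p ^ i)%N)) /index_iota subn0.
Qed.

Lemma divn_pfactor k (i : 'I_k.+1) : (p ^ k %/ p ^ i)%N = (p ^ (k - i))%N.
Proof. by rewrite expnB ?prime_gt0 // -ltnS. Qed.

Lemma beta_pfactor k : beta (p ^ k) = altgeom p%:Z k.
Proof.
rewrite /beta sum_divisors_pfactor; apply: eq_bigr => i _.
by rewrite divn_pfactor liouville_pfactor // PoszX.
Qed.

Lemma beta2_pfactor k : beta2 (p ^ k) = altgeom (p%:Z ^+ 2) k.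
Proof.
rewrite /beta2 sum_divisors_pfactor; apply: eq_bigr => i _.
by rewrite divn_pfactor liouville_pfactor // !PoszX exprAC.
Qed.

Lemma sigma_pfactor k : sigma (p ^ k) = geom p%:Z k.
Proof. by rewrite /sigma sum_divisors_pfactor; apply: eq_bigr => i _; rewrite PoszX. Qed.

Lemma sigma2_pfactor k : sigma2 (p ^ k) = geom (p%:Z ^+ 2) k.
Proof.
by rewrite /sigma2 sum_divisors_pfactor; apply: eq_bigr => i _; rewrite !PoszX exprAC.
Qed.

Lemma two_pow_omega_pfactor i : (2 ^ omega (p ^ i))%N%:Z = weight i.
Proof.
case: i => [|i]; first by rewrite expn0.
by rewrite omega_pfactor.
Qed.

End PrimePowerValues.

Lemma id_multiplicative : arith_multiplicative (fun d => d%:Z).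
Proof. by split=> // m n *; rewrite PoszM. Qed.

Lemma sq_multiplicative : arith_multiplicative (fun d => (d ^ 2)%N%:Z).
Proof. by split=> // m n *; rewrite expnMn PoszM. Qed.

Lemma two_pow_omega_multiplicative : arith_multiplicative (fun d => (2 ^ omega d)%N%:Z).
Proof. by split=> // m n *; rewrite omegaM // expnD PoszM. Qed.

Lemma beta_multiplicative : arith_multiplicative beta.
Proof. exact: dconv_multiplicative id_multiplicative liouville_multiplicative. Qed.

Lemma beta2_multiplicative : arith_multiplicative beta2.
Proof. exact: dconv_multiplicative sq_multiplicative liouville_multiplicative. Qed.

(* sigma_j is the convolution of d |-> d ^ j with the constant function 1. *)
Lemma one_multiplicative : arith_multiplicative (fun _ => 1 : int).
Proof. by split=> // *; rewrite mulr1. Qed.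

Lemma sigma_multiplicative : arith_multiplicative sigma.
Proof.
apply: arith_multiplicative_ext (dconv_multiplicative id_multiplicative one_multiplicative).
by move=> n; apply: eq_bigr => d _; rewrite mulr1.
Qed.

Lemma sigma2_multiplicative : arith_multiplicative sigma2.
Proof.
apply: arith_multiplicative_ext (dconv_multiplicative sq_multiplicative one_multiplicative).
by move=> n; apply: eq_bigr => d _; rewrite mulr1.
Qed.

Lemma identity_beta_sqr n : (0 < n)%N -> beta n ^+ 2 =
  \sum_(d <- divisors n) (d%:Z * (2 ^ omega d)%N%:Z * liouville d * sigma2 (n %/ d)%N).
Proof.
pose h d := d%:Z * (2 ^ omega d)%N%:Z * liouville d.
have h_mult : arith_multiplicative h.
  apply: arith_multiplicativeM; last exact: liouville_multiplicative.
  exact: arith_multiplicativeM id_multiplicative two_pow_omega_multiplicative.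
apply: (arith_multiplicative_eq (f := fun n => beta n ^+ 2) (g := dconv h sigma2)).
- exact: arith_multiplicativeX beta_multiplicative.
- exact: dconv_multiplicative h_mult sigma2_multiplicative.
move=> p k p_pr _; rewrite /= (beta_pfactor p_pr) altgeom_sq_weighted.
rewrite /dconv (sum_divisors_pfactor p_pr); apply: eq_bigr => i _.
by rewrite /h (divn_pfactor p_pr) (sigma2_pfactor p_pr) PoszX
  (two_pow_omega_pfactor p_pr) (liouville_pfactor _ p_pr).
Qed.

(* Second identity: beta(n^2) = sum_(dk = n) d mu(d) sigma_2(k); at p ^ k only the
   divisors 1 and p contribute. *)
Lemma identity_beta_of_square n : (0 < n)%N ->
  beta (n * n)%N = \sum_(d <- divisors n) (d%:Z * moebius d * sigma2 (n %/ d)%N).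
Proof.
have h_mult : arith_multiplicative (fun d => d%:Z * moebius d).
  exact: arith_multiplicativeM id_multiplicative moebius_multiplicative.
apply: (arith_multiplicative_eq (arith_multiplicative_sq beta_multiplicative)
          (dconv_multiplicative h_mult sigma2_multiplicative)).
move=> p [//|k] p_pr _; rewrite /= -expnD addSn addnS (beta_pfactor p_pr) altgeom_double.
rewrite /dconv (sum_divisors_pfactor p_pr) 2!big_ord_recl big1 => [|i _]; last first.
  by rewrite (moebius_pfactorSS _ p_pr) mulr0 mul0r.
have -> : (p ^ k.+1 %/ p = p ^ k)%N by rewrite expnS mulKn ?prime_gt0.
rewrite expn0 divn1 expn1 (proj1 moebius_multiplicative) (moebius_prime p_pr).
by rewrite !(sigma2_pfactor p_pr); ring.
Qed.

(* Third identity: its right-hand side is the divisor sum of the kernel below,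
   whose term of index d vanishes unless d ^ 2 | n. *)
Definition sqdiv_kernel (d n : nat) : int :=
  if (d * d %| n)%N then (d * d)%N%:Z * (2 ^ omega d)%N%:Z * beta2 (n %/ (d * d))%N
  else 0.

Lemma sqdiv_kernel_multiplicative :
  arith_multiplicative (fun n => \sum_(d <- divisors n) sqdiv_kernel d n).
Proof.
apply: divisor_sum_multiplicative.
  by rewrite /sqdiv_kernel dvdnn divn1 (proj1 beta2_multiplicative).
move=> m n a b m_gt0 n_gt0 co_mn a_m b_n.
have co_ab : coprime a b := coprime_dvdl a_m (coprime_dvdr b_n co_mn).
have co_aa_n : coprime (a * a) n by rewrite coprimeMl (coprime_dvdl a_m co_mn).
have co_bb_m : coprime (b * b) m by rewrite coprimeMl coprime_sym (coprime_dvdr b_n co_mn).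
have co_aa_bb : coprime (a * a) (b * b) by rewrite coprimeMl !coprimeMr co_ab.
rewrite /sqdiv_kernel mulnACA Gauss_dvd // Gauss_dvdl // Gauss_dvdr //.
case aa_m : (a * a %| m)%N; case bb_n : (b * b %| n)%N; rewrite /= ?mulr0 ?mul0r //.
rewrite divn_mulM // omegaM ?(dvdn_gt0 m_gt0 a_m) ?(dvdn_gt0 n_gt0 b_n) // expnD !PoszM.
rewrite (proj2 beta2_multiplicative) ?(divn_dvd_gt0 m_gt0) ?(divn_dvd_gt0 n_gt0) //; first ring.
exact: coprime_dvdl (dvdn_div aa_m) (coprime_dvdr (dvdn_div bb_n) co_mn).
Qed.

Lemma identity_beta_sigma n : (0 < n)%N -> beta n * sigma n =
  \sum_(d <- divisors n | (d * d %| n)%N)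
     ((d * d)%N%:Z * (2 ^ omega d)%N%:Z * beta2 (n %/ (d * d))%N).
Proof.
rewrite big_mkcond.
apply: (arith_multiplicative_eq (arith_multiplicativeM beta_multiplicative sigma_multiplicative)
          sqdiv_kernel_multiplicative).
move=> p k p_pr _; rewrite /= (beta_pfactor p_pr) (sigma_pfactor p_pr) altgeom_geom_weighted.
rewrite (sum_divisors_pfactor p_pr); apply: eq_bigr => i _.
rewrite /sqdiv_kernel -expnD dvdn_Pexp2l ?prime_gt1 //; case: ifP => // ii_le_k.
by rewrite -expnB ?prime_gt0 // (beta2_pfactor p_pr) (two_pow_omega_pfactor p_pr) PoszX exprD expr2.
Qed.

Theorem mainTheorem15 (n : nat) (hn : (0 < n)%N) :
  [/\ beta n ^+ 2 =
        \sum_(d <- divisors n)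
           (d%:Z * (2 ^ omega d)%N%:Z * liouville d * sigma2 (n %/ d)%N),
      beta (n * n)%N =
        \sum_(d <- divisors n) (d%:Z * moebius d * sigma2 (n %/ d)%N)
    & beta n * sigma n =
        \sum_(d <- divisors n | (d * d %| n)%N)
           ((d * d)%N%:Z * (2 ^ omega d)%N%:Z * beta2 (n %/ (d * d))%N)].
Proof.
split; [exact: identity_beta_sqr | exact: identity_beta_of_square | exact: identity_beta_sigma].
Qed.
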